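(* Let $M=p_1^{n_1}\cdots p_K^{n_K}$ with distinct primes and $n_\nu\in\mathbb{N}$, let $A\oplus B=\mathbb{Z}_M$, and fix $i\in\{1,\dots,K\}$. Then the following are equivalent: (I) $\Phi_{p_i^{n_i}}(X)\mid A(X)$, and for every $m$ with $p_i^{n_i}\mid m\mid M$, $m\in\mathrm{Div}(A)$ implies $m/p_i\notin\mathrm{Div}(B)$; (II) for every $r\in R$, the tiling $A\oplus rB=\mathbb{Z}_M$ has uniform $(rB,A)$ splitting parity in the $p_i$ direction, i.e. every fiber $z*F_i$, $z\in\mathbb{Z}_M$, splits with parity $(rB,A)$ with respect to the tiling $A\oplus rB=\mathbb{Z}_M$; (III) for every $a\in A$, $b\in B$ and every $x\in a*F_i$, we have $A_{x,b}\subset\Pi(x,p_i^{n_i})$.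
   Context: $A\oplus B=\mathbb{Z}_M$ means every element of $\mathbb{Z}_M$ is uniquely $a+b$ with $a\in A$, $b\in B$. $A(X)=\sum_{a\in A}X^a$ ($A$ viewed in $\{0,\dots,M-1\}$), $\Phi_s$ the $s$-th cyclotomic polynomial. $(x,M)=\gcd(x,M)$; $\mathrm{Div}(A)=\{(a-a',M):a,a'\in A\}$. $R=\{r\in\mathbb{Z}_M:(r,M)=1\}$, $rB=\{rb:b\in B\}$. $\Pi(y,p_i^\alpha)=\{y'\in\mathbb{Z}_M:p_i^\alpha\mid y-y'\}$. $F_i=\{0,M/p_i,\dots,(p_i-1)M/p_i\}$, $x*F_i=\{x+f:f\in F_i\}$. For $x,y\in\mathbb{Z}_M$, $A_{x,y}=\{a\in A:(x-a,M)=(y-b',M)\text{ for some }b'\in B\}$. For a tiling $A\oplus C=\mathbb{Z}_M$ and $Z\subset\mathbb{Z}_M$, $\Sigma_A(Z)=\{a\in A:a+c\in Z\text{ for some }c\in C\}$, $\Sigma_C(Z)$ analogously. A fiber $Z=z*F_i$ splits with parity $(C,A)$ if $p_i^{n_i}\mid c-c'$ for all $c,c'\in\Sigma_C(Z)$ and, for all distinct $a,a'\in\Sigma_A(Z)$, $p_i^{n_i-1}\mid a-a'$ but $p_i^{n_i}\nmid a-a'$. *)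

From mathcomp Require Import all_boot all_order all_algebra all_field.
Set Implicit Arguments. Unset Strict Implicit. Unset Printing Implicit Defensive.

(* Elements of Z_M are represented by 'I_M (residues 0..M-1); subsets of Z_M
   by {set 'I_M}. All arithmetic is done on representatives modulo M. *)

(* representative in [0,M) of x - y in Z_M, for x y < M *)
Definition zdiff (M x y : nat) : nat := (x + M - y) %% M.

Definition tiling (M : nat) (A B : {set 'I_M}) : Prop :=
  forall x : 'I_M, exists! ab : 'I_M * 'I_M,
    [&& ab.1 \in A, ab.2 \in B & (ab.1 + ab.2) %% M == x].

Definition polyA (M : nat) (A : {set 'I_M}) : {poly int} :=
  (\sum_(a in A) 'X^a)%R.

Definition Div (M : nat) (A : {set 'I_M}) (m : nat) : Prop :=
  exists a a' : 'I_M, [/\ a \in A, a' \in A & gcdn (zdiff M a a') M = m].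

Definition mulset (M r : nat) (B : {set 'I_M}) : {set 'I_M} :=
  [set y : 'I_M | [exists b in B, val y == (r * b) %% M]].

Definition Pi (M : nat) (y : 'I_M) (q : nat) : {set 'I_M} :=
  [set y' : 'I_M | q %| zdiff M y y'].

Definition fiber (M p : nat) (x : 'I_M) : {set 'I_M} :=
  [set y : 'I_M | [exists k : 'I_p, val y == (x + k * (M %/ p)) %% M]].

(* Sigma_X(Z) w.r.t. the pair (X, Y): { x in X : x + y in Z for some y in Y } *)
Definition Sigma (M : nat) (X Y Z : {set 'I_M}) : {set 'I_M} :=
  [set x in X | [exists y in Y, [exists z in Z, val z == (x + y) %% M]]].

(* the fiber Z splits with parity (C, A) w.r.t. the tiling A (+) C,
   p^n being the full power of p dividing M *)
Definition splits_parity (M p n : nat) (C A Z : {set 'I_M}) : Prop :=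
  (forall c c', c \in Sigma C A Z -> c' \in Sigma C A Z ->
     p ^ n %| zdiff M c c') /\
  (forall a a', a \in Sigma A C Z -> a' \in Sigma A C Z -> a != a' ->
     p ^ n.-1 %| zdiff M a a' /\ ~~ (p ^ n %| zdiff M a a')).

Definition Axy (M : nat) (A B : {set 'I_M}) (x y : 'I_M) : {set 'I_M} :=
  [set a in A | [exists b' in B, gcdn (zdiff M x a) M == gcdn (zdiff M y b') M]].

(* All three conditions are equivalent to the pointwise form of (III): for
   [a, a'] in [A], [b, b'] in [B] and [x = a + k M/p] in the fiber of [a],
   [(x - a', M) = (b - b', M)] forces [p ^ n | x - a'].
   Equal gcds with [M] mean [x - a' = r (b - b')] for a unit [r], and [A (+) rB]
   is again a tiling (Tijdeman: in characteristic [t], [B(X)^t = B(X^t)], so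
   every element of [A + tB] is hit [|B|^(t-1)] times modulo [t], hence once).
   The condition thus says that two tiles [a + r b] and [a' + r b'] meeting one
   fiber have [r b = r b'] modulo [p ^ n]: this is the [rB]-half of (II), and the
   uniqueness of the decomposition gives its [A]-half.
   For (I), [(u + k M/p, M) = (u, M)] unless [p ^ n | u], where it becomes
   [(u, M) / p]; with Sands' theorem ([Div(A)] and [Div(B)] meet only in [M])
   this turns the condition into the divisor condition of (I).  Moreover the
   [A]-component [a(x)] of [x] satisfies [a(x + k M/p) = a(x) + k M/p] modulo
   [p ^ n], so [X^(p^(n-1)) A(X) = A(X)] modulo [X^(p^n) - 1], which is
   [Phi_(p^n) (X^(p^(n-1)) - 1)]; hence [Phi_(p^n) | A(X)]. *)

From mathcomp Require Import all_boot all_order all_algebra all_field.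
Set Implicit Arguments. Unset Strict Implicit. Unset Printing Implicit Defensive.
Import GRing.Theory.

Lemma congr_modDl M x x' y : x = x' %[mod M] -> x + y = x' + y %[mod M].
Proof. by move=> e; rewrite -modnDml e modnDml. Qed.

Lemma congr_modDr M x y y' : y = y' %[mod M] -> x + y = x + y' %[mod M].
Proof. by move=> e; rewrite -modnDmr e modnDmr. Qed.

Lemma congr_modMr M x y y' : y = y' %[mod M] -> x * y = x * y' %[mod M].
Proof. by move=> e; rewrite -modnMmr e modnMmr. Qed.

Section ModularDifference.
Variable M : nat.
Implicit Types d r u v w : nat.

Lemma zdiffK u v : v <= M -> zdiff M u v + v = u %[mod M].
Proof.
move=> vM; rewrite /zdiff modnDml subnK ?modnDr //.
exact: leq_trans vM (leq_addl _ _).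
Qed.

Lemma zdiff_congr u v w : v <= M -> w + v = u %[mod M] -> zdiff M u v = w %[mod M].
Proof. by move=> vM e; apply/eqP; rewrite -(eqn_modDr v) e zdiffK. Qed.

Lemma zdiff_modl u v : v <= M -> zdiff M (u %% M) v = zdiff M u v.
Proof. by move=> vM; rewrite /zdiff -!addnBA // modnDml. Qed.

Lemma zdiffDl u w v : v <= M -> zdiff M (u + w) v = zdiff M u v + w %[mod M].
Proof.
by move=> vM; apply: (zdiff_congr vM); rewrite addnAC (congr_modDl _ (zdiffK u vM)).
Qed.

Lemma zdiffnn u : zdiff M u u = 0.
Proof. by rewrite /zdiff addnC addnK modnn. Qed.

Lemma congr_mod_dvd d u v : d %| M -> u = v %[mod M] -> u = v %[mod d].
Proof. by move=> dM e; rewrite -(modn_dvdm u dM) e modn_dvdm. Qed.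

Lemma dvdn_congr d u v : d %| M -> u = v %[mod M] -> (d %| u) = (d %| v).
Proof. by move=> dM e; rewrite /dvdn (congr_mod_dvd dM e). Qed.

Lemma dvdn_zdiff d u v : d %| M -> v <= M -> (d %| zdiff M u v) = (u == v %[mod d]).
Proof.
move=> dM vM; have vuM : v <= u + M by apply: leq_trans vM (leq_addl _ _).
rewrite /dvdn /zdiff (modn_dvdm _ dM) -/(dvdn d (u + M - v)) -eqn_mod_dvd //.
by rewrite -modnDmr (eqP dM) addn0.
Qed.

Lemma gcdn_congr u v : u = v %[mod M] -> gcdn u M = gcdn v M.
Proof. by move=> e; rewrite -gcdn_modl e gcdn_modl. Qed.

Lemma gcdn_unit r u : coprime r M -> gcdn (r * u) M = gcdn u M.
Proof. by move=> c; rewrite gcdnC Gauss_gcdr 1?gcdnC // coprime_sym. Qed.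

Lemma eq_gcdn_dvd u v : (forall d, d %| M -> (d %| u) = (d %| v)) ->
  gcdn u M = gcdn v M.
Proof.
move=> H; apply/eqP; rewrite eqn_dvd !dvdn_gcd !dvdn_gcdr !andbT.
by rewrite -(H _ (dvdn_gcdr u M)) (H _ (dvdn_gcdr v M)) !dvdn_gcdl.
Qed.

End ModularDifference.

Lemma coprime_primes m n : 0 < n ->
  (forall l, prime l -> l %| n -> ~~ (l %| m)) -> coprime m n.
Proof.
move=> n0 H; have g0 : 0 < gcdn m n by rewrite gcdn_gt0 n0 orbT.
have [g1|/pdivP[l pl lg]] := leqP (gcdn m n) 1; first by rewrite /coprime eqn_leq g1.
by move: (H l pl (dvdn_trans lg (dvdn_gcdr _ _))); rewrite (dvdn_trans lg (dvdn_gcdl _ _)).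
Qed.

Lemma coprime_lift M N r0 : 0 < M -> N %| M -> coprime r0 N ->
  exists2 r, coprime r M & r = r0 %[mod N].
Proof.
move=> M0 NM c0.
(* [s] is the product of the primes of [M] missing from [r0], so [r0 + N * s]
   avoids every prime of [M]. *)
pose s := \prod_(l <- primes M | ~~ (l %| r0)) l.
have ls l : prime l -> (l %| s) = (l \in primes M) && ~~ (l %| r0).
  move=> pl; rewrite Euclid_dvd_prod // big_has_cond; apply/hasP/idP.
    case=> l' l'M /andP[nl' ll']; move: (l'M); rewrite mem_primes => /and3P[pl' _ _].
    by move: ll'; rewrite dvdn_prime2 // => /eqP ->; rewrite l'M nl'.
  by case/andP=> lM nl; exists l => //=; rewrite nl dvdnn.
exists (r0 + N * s); last by rewrite addnC mulnC modnMDl.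
apply: coprime_primes => // l pl lM.
have lMp : l \in primes M by rewrite mem_primes pl M0 lM.
have [lr0|nlr0] := boolP (l %| r0).
  rewrite dvdn_addr // Euclid_dvdM // negb_or ls // lr0 andbF andbT.
  by rewrite -prime_coprime // (coprime_dvdl lr0 c0).
have lNs : l %| N * s by rewrite dvdn_mull // ls // lMp nlr0.
by rewrite dvdn_addl.
Qed.

Lemma coprime_inv_mod w N : coprime w N -> exists2 v, coprime v N & v * w = 1 %[mod N].
Proof.
have [-> c|w0 c] := posnP w.
  by move: c; rewrite /coprime gcd0n => /eqP ->; exists 1.
case: (egcdnP N w0) => v k e _; rewrite (eqnP c) addn1 in e.
exists v; last by rewrite e -addn1 modnMDl.
have v0 : 0 < v by case: v e.
by apply/coprimeP => //; exists (w, k); rewrite /= mulnC e -addn1 addKn.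
Qed.

Lemma gcdn_eq_unit M u w : 0 < M -> gcdn u M = gcdn w M ->
  exists2 r, coprime r M & u = r * w %[mod M].
Proof.
move=> M0 e; set m := gcdn w M.
have m0 : 0 < m by rewrite gcdn_gt0 M0 orbT.
have [N DM] := dvdnP (dvdn_gcdr w M); rewrite -/m in DM.
have NM : N %| M by rewrite DM dvdn_mulr.
have [u1 Du] : exists u1, u = u1 * m by apply/dvdnP; rewrite /m -e dvdn_gcdl.
have [w1 Dw] := dvdnP (dvdn_gcdl w M); rewrite -/m in Dw.
have cop x1 : gcdn (x1 * m) M = m -> coprime x1 N.
  by rewrite {1}DM -muln_gcdl -{2}[m]mul1n => /eqP; rewrite eqn_pmul2r.
have cw : coprime w1 N by apply: cop; rewrite -Dw.
have cu : coprime u1 N by apply: cop; rewrite -Du e.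
have [v cv ev] := coprime_inv_mod cw.
have c0 : coprime (v * u1) N by rewrite coprimeMl cv cu.
have [r cr er] := coprime_lift M0 NM c0.
exists r => //; rewrite Du Dw DM mulnA -!muln_modl; congr (_ * _).
by rewrite -modnMml er modnMml -mulnA mulnCA -modnMmr ev modnMmr muln1.
Qed.

Lemma gcdn_zdiff_unit M x y b b' : 0 < M -> y <= M -> b' <= M ->
  gcdn (zdiff M x y) M = gcdn (zdiff M b b') M ->
  exists2 r : 'I_M, coprime r M & x + r * b' = y + r * b %[mod M].
Proof.
move=> M0 yM bM /(gcdn_eq_unit M0)[r0 cr er].
exists (Ordinal (ltn_pmod r0 M0)); first by rewrite coprime_modl.
rewrite /= (congr_modDr x (modnMml r0 b' M)) (congr_modDr y (modnMml r0 b M)).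
rewrite -(congr_modDl (r0 * b') (zdiffK x yM)) (congr_modDl (r0 * b') (congr_modDl y er)).
rewrite -(congr_modDr y (congr_modMr r0 (zdiffK b bM))).
by rewrite mulnDr addnAC addnC.
Qed.

Lemma dvdn_mul_lcm_pexp p k e : prime p -> ~~ (p ^ k %| e) -> e * p %| lcmn e (p ^ k).
Proof.
move=> pp ne.
have [j jk Dg] : exists2 j, j <= k & gcdn e (p ^ k) = p ^ j.
  by apply/dvdn_pfactor => //; apply: dvdn_gcdr.
have jk' : j < k.
  by rewrite ltn_neqAle jk andbT; apply: contra ne => /eqP <-; rewrite -Dg dvdn_gcdl.
rewrite /lcmn Dg -muln_divA ?dvdn_exp2l // -expnB ?prime_gt0 //.
by apply: dvdn_mul (dvdnn e) _; rewrite -{1}(expn1 p) dvdn_exp2l // subn_gt0.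
Qed.

Section PrimeFiberArithmetic.
Variables M p : nat.
Hypotheses (M0 : 0 < M) (pp : prime p) (pM : p %| M).
Local Notation n := (logn p M).
Local Notation q := (M %/ p).

Lemma logn_gt0_dvd : 0 < n.
Proof. by rewrite logn_gt0 mem_primes pp M0 pM. Qed.

Lemma pexp_pred_dvd_q : p ^ n.-1 %| q.
Proof.
by rewrite dvdn_divRL // -expnSr prednK ?logn_gt0_dvd ?pfactor_dvdnn.
Qed.

Lemma pexp_ndvd_q : ~~ (p ^ n %| q).
Proof.
apply/negP => h; have : p ^ n * p %| q * p by rewrite dvdn_pmul2r ?prime_gt0.
by rewrite divnK // -expnSr pfactor_dvdn // ltnn.
Qed.

Lemma pexp_ndvd_mul_q k : 0 < k < p -> ~~ (p ^ n %| k * q).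
Proof.
case/andP=> k0 kp; rewrite Gauss_dvdr ?pexp_ndvd_q //.
by rewrite coprime_pexpl ?logn_gt0_dvd // prime_coprime // gtnNdvd.
Qed.

Lemma dvdn_q d : d %| M -> ~~ (p ^ n %| d) -> d %| q.
Proof.
move=> dM nd; rewrite dvdn_divRL //.
by apply: dvdn_trans (dvdn_mul_lcm_pexp pp nd) _; rewrite dvdn_lcm dM pfactor_dvdnn.
Qed.

Lemma gcdn_shift u k : 0 < k < p -> ~~ (p ^ n %| u) -> ~~ (p ^ n %| u + k * q) ->
  gcdn (u + k * q) M = gcdn u M.
Proof.
move=> kp nu nuk; apply: eq_gcdn_dvd => d dM.
have [pd|npd] := boolP (p ^ n %| d).
  by apply/idP/idP => /(dvdn_trans pd) ?; [case/negP: nuk | case/negP: nu].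
by rewrite dvdn_addl // dvdn_mull // dvdn_q.
Qed.

Lemma gcdn_shift_pexp u k : 0 < k < p -> p ^ n %| u ->
  gcdn (u + k * q) M = gcdn u M %/ p.
Proof.
move=> kp pu; set m := gcdn u M; set e := gcdn (u + k * q) M.
have pnm : p ^ n %| m by rewrite dvdn_gcd pu pfactor_dvdnn.
have pm : p %| m by apply: dvdn_trans pnm; rewrite -{1}(expn1 p) dvdn_exp2l ?logn_gt0_dvd.
have ne : ~~ (p ^ n %| e).
  apply: contra (pexp_ndvd_mul_q kp) => /dvdn_trans/(_ (dvdn_gcdl _ _)).
  by rewrite dvdn_addr.
have eq : e %| q by apply: dvdn_q ne; apply: dvdn_gcdr.
apply/eqP; rewrite eqn_dvd; apply/andP; split.
  rewrite dvdn_divRL // dvdn_gcd -(divnK pM) dvdn_pmul2r ?prime_gt0 // andbC eq.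
  have eu : e %| u by rewrite -(dvdn_addl _ (dvdn_mull k eq)) dvdn_gcdl.
  by apply: dvdn_trans (dvdn_mul_lcm_pexp pp ne) _; rewrite dvdn_lcm eu pu.
have mq : m %/ p %| q by rewrite dvdn_divLR ?prime_gt0 // divnK // dvdn_gcdr.
have mu : m %/ p %| u := dvdn_trans (dvdn_div pm) (dvdn_gcdl u M).
have mM : m %/ p %| M := dvdn_trans (dvdn_div pm) (dvdn_gcdr u M).
by rewrite dvdn_gcd mM dvdn_add ?dvdn_mull.
Qed.

Lemma mul_q_congr k1 k2 : k1 = k2 %[mod p] -> k1 * q = k2 * q %[mod M].
Proof. by move=> e; rewrite -{2 4}(divnK pM) [q * p]mulnC -!muln_modl e. Qed.

Lemma mul_q_neq k1 k2 : k1 < p -> k2 < p -> k1 != k2 -> k1 * q != k2 * q %[mod p ^ n].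
Proof.
wlog lt12 : k1 k2 / k1 < k2.
  move=> W k1p k2p; case: (ltngtP k1 k2) => [lt12|lt21|->]; last by rewrite eqxx.
    by move=> _; apply: W lt12 k1p k2p (negbT (ltn_eqF lt12)).
  by move=> _; rewrite eq_sym; apply: W lt21 k2p k1p (negbT (ltn_eqF lt21)).
move=> _ k2p _; rewrite eq_sym eqn_mod_dvd ?leq_mul2r ?(ltnW lt12) ?orbT //.
by rewrite -mulnBl pexp_ndvd_mul_q // subn_gt0 lt12 (leq_ltn_trans (leq_subr _ _) k2p).
Qed.

Lemma exists_mul_q_pexp_pred : exists k, k * q = p ^ n.-1 %[mod p ^ n].
Proof.
have [m cm DM] := pfactor_coprime pp M0.
have m0 : 0 < m by move: M0; rewrite DM muln_gt0 => /andP[].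
have [km kp ek _] := egcdnP p m0.
have Dq : q = m * p ^ n.-1.
  by rewrite {1}DM -(prednK logn_gt0_dvd) expnSr mulnA mulnK ?prime_gt0.
exists km; rewrite Dq mulnA ek gcdnC (eqnP cm) mulnDl mul1n -mulnA.
by rewrite -expnS prednK ?logn_gt0_dvd // modnMDl.
Qed.

End PrimeFiberArithmetic.

Section CongruenceModXn.
Variables (R : idomainType) (N : nat).
Implicit Types P Q Z : {poly R}.

Definition congrXn P Q := ('X^N - 1 %| P - Q)%R.

Lemma congrXn_refl P : congrXn P P.
Proof. by rewrite /congrXn subrr dvdp0. Qed.

Lemma congrXn_sym P Q : congrXn P Q -> congrXn Q P.
Proof. by rewrite /congrXn -[(Q - P)%R]opprB dvdpNr. Qed.

Lemma congrXn_trans P Q Z : congrXn P Q -> congrXn Q Z -> congrXn P Z.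
Proof. by move=> h1 h2; have := dvdp_add h1 h2; rewrite addrA subrK. Qed.

Lemma congrXnMr P Q Z : congrXn P Q -> congrXn (P * Z) (Q * Z).
Proof. by move=> h; rewrite /congrXn -mulrBl dvdp_mulr. Qed.

Lemma congrXnMn P Q k : congrXn P Q -> congrXn (P *+ k) (Q *+ k).
Proof. by move=> h; rewrite /congrXn -mulrnBl -mulr_natr dvdp_mulr. Qed.

Lemma congrXn_sum I r (C : pred I) (F G : I -> {poly R}) :
  (forall i, C i -> congrXn (F i) (G i)) ->
  congrXn (\sum_(i <- r | C i) F i) (\sum_(i <- r | C i) G i).
Proof.
move=> h; rewrite /congrXn -sumrB.
by apply: (big_ind (fun P => 'X^N - 1 %| P)%R); [apply: dvdp0 | apply: dvdp_add |].
Qed.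

Lemma congrXn_exp u v : u = v %[mod N] -> congrXn 'X^u 'X^v.
Proof.
have modX w : congrXn 'X^w 'X^(w %% N).
  rewrite /congrXn {1}(divn_eq w N) exprD mulnC exprM -{2}[('X^(w %% N))%R]mul1r -mulrBl.
  by apply: dvdp_mulr; rewrite [X in (_ %| X)%R]subrX1 dvdp_mulr.
by move=> e; apply: congrXn_trans (modX u) _; rewrite e; apply/congrXn_sym.
Qed.

Lemma congrXn_mul_sumX j : congrXn ('X^j * \sum_(i < N) 'X^i) (\sum_(i < N) 'X^i).
Proof.
elim: j => [|j IH]; first by rewrite mul1r congrXn_refl.
apply: congrXn_trans IH; rewrite exprS -mulrA mulrCA /congrXn -mulrBr dvdp_mull //.
by rewrite -[X in (_ %| _ - X)%R]mul1r -mulrBl -subrX1.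
Qed.

Lemma congrXn_coef (c d : 'I_N -> R) :
  congrXn (\sum_(i < N) c i *: 'X^i) (\sum_(i < N) d i *: 'X^i) -> c =1 d.
Proof.
move=> h i; have N0 : 0 < N by apply: leq_ltn_trans (ltn_ord i).
set P := (\sum_(i < N) (c i - d i) *: 'X^i)%R.
have coefP k : (P`_k = \sum_(j < N | nat_of_ord j == k) (c j - d j))%R.
  by rewrite coef_sumMXn.
have hP : ('X^N - 1 %| P)%R.
  move: h; rewrite /congrXn -sumrB (eq_bigr (fun j => (c j - d j) *: 'X^j)%R) //.
  by move=> j _; rewrite scalerBl.
have P0 : P = 0%R.
  apply/eqP; apply: contraTT hP => nzP; apply/negP => /(dvdp_leq nzP).
  rewrite size_XnsubC // leqNgt ltnS => /negP; apply; apply/leq_sizeP => k kN.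
  by rewrite coefP big_pred0 // => j; apply/negbTE; rewrite neq_ltn (leq_trans (ltn_ord j) kN).
have := coefP i; rewrite P0 coef0 (big_pred1 i) => [/esym/eqP|j] //.
by rewrite subr_eq0 => /eqP.
Qed.

End CongruenceModXn.

Lemma Xpexp_sub1_Cyclotomic p k : prime p ->
  ('X^(p ^ k.+1) - 1 : {poly int})%R = ('Phi_(p ^ k.+1) * ('X^(p ^ k) - 1))%R.
Proof.
move=> pp; have p0 := prime_gt0 pp.
have pk0 j : 0 < p ^ j by rewrite expn_gt0 p0.
rewrite -(prod_Cyclotomic (pk0 k.+1)) -(prod_Cyclotomic (pk0 k)).
suff pe : perm_eq (divisors (p ^ k.+1)) (p ^ k.+1 :: divisors (p ^ k)).
  by rewrite (perm_big _ pe) big_cons.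
apply: uniq_perm; rewrite /= ?divisors_uniq ?andbT //.
  by rewrite -dvdn_divisors // dvdn_Pexp2l ?prime_gt1 // ltnn.
move=> d; rewrite inE -!dvdn_divisors //; apply/idP/idP.
  case/(dvdn_pfactor _ _ pp) => j; rewrite leq_eqVlt => /orP[/eqP -> -> | jk ->].
    by rewrite eqxx.
  by rewrite dvdn_exp2l ?orbT.
by case/orP => [/eqP -> // | /dvdn_trans]; apply; rewrite dvdn_exp2l.
Qed.

Section DilatedTilings.
Variables (M : nat) (A B : {set 'I_M}).
Hypothesis M0 : 0 < M.

Definition tiles_by (f : 'I_M -> nat) := forall x : 'I_M,
  exists! ab : 'I_M * 'I_M, [&& ab.1 \in A, ab.2 \in B & (ab.1 + f ab.2) %% M == x].

Definition tile_sum (f : 'I_M -> nat) (ab : 'I_M * 'I_M) : 'I_M :=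
  Ordinal (ltn_pmod (ab.1 + f ab.2) M0).

Definition tile_mult f x := #|[set ab in setX A B | tile_sum f ab == x]|.

Lemma tile_multE f x ab : (ab \in [set ab in setX A B | tile_sum f ab == x]) =
  [&& ab.1 \in A, ab.2 \in B & (ab.1 + f ab.2) %% M == x].
Proof. by case: ab => a b; rewrite !inE andbA. Qed.

Lemma tiles_byP f : tiles_by f <-> forall x, tile_mult f x = 1.
Proof.
split=> [U x | U1 x].
  have [ab0 [h0 u0]] := U x; apply/eqP/cards1P; exists ab0; apply/setP => ab.
  by rewrite tile_multE inE; apply/idP/eqP => [/u0 -> | ->].
have /eqP/cards1P[ab0 e] := U1 x; exists ab0; split; first by rewrite -tile_multE e set11.
by move=> ab; rewrite -tile_multE e inE => /eqP.
Qed.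

Lemma eq_tiles_by f g : f =1 g -> tiles_by f -> tiles_by g.
Proof.
move=> fg U x; have [ab [h u]] := U x.
by exists ab; split=> [|ab']; rewrite -?fg //; apply: u.
Qed.

Lemma sum_tile_mult (V : nmodType) f (G : 'I_M -> V) :
  (\sum_(ab in setX A B) G (tile_sum f ab) = \sum_x G x *+ tile_mult f x)%R.
Proof.
rewrite (partition_big (tile_sum f) predT) //=; apply: eq_bigr => x _.
rewrite (eq_bigr (fun _ => G x)) => [|ab /andP[_ /eqP -> //]].
by rewrite sumr_const; congr (_ *+ _)%R; apply: eq_card => ab; rewrite inE.
Qed.

Lemma sum_tile_mult_card f : \sum_x tile_mult f x = #|A| * #|B|.
Proof.
rewrite -cardsX -sum1_card (partition_big (tile_sum f) predT) //=.
by apply: eq_bigr => x _; rewrite sum1_card; apply: eq_card => ab; rewrite inE.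
Qed.

Lemma tiles_by_card f : tiles_by f -> #|A| * #|B| = M.
Proof.
move/tiles_byP=> U1; rewrite -(sum_tile_mult_card f) (eq_bigr (fun=> 1)) //.
by rewrite sum1_card card_ord.
Qed.

Lemma sum_tiles_by (V : nmodType) f (G : 'I_M -> V) : tiles_by f ->
  (\sum_(ab in setX A B) G (tile_sum f ab) = \sum_x G x)%R.
Proof.
by move/tiles_byP=> U1; rewrite sum_tile_mult; apply: eq_bigr => x _; rewrite U1.
Qed.

Section Characteristic.
Variables (R : idomainType) (t : nat).
Hypothesis tR : t \in [pchar R]%R.

Local Notation PA := (\sum_(a in A) 'X^a : {poly R})%R.
Local Notation PB f := (\sum_(b in B) 'X^(f b) : {poly R})%R.
Local Notation count_poly f := (\sum_(x < M) (tile_mult f x)%:R *: 'X^x : {poly R})%R.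
Local Notation SX := (\sum_(x < M) 'X^x : {poly R})%R.

Lemma congrXn_tile_polys f : congrXn M (PA * PB f) (count_poly f).
Proof.
have -> : (PA * PB f = \sum_(ab in setX A B) 'X^(ab.1 + f ab.2))%R.
  rewrite mulr_suml (eq_bigr (fun a : 'I_M => \sum_(b in B) 'X^a * 'X^(f b)))%R.
    by rewrite pair_big_dep; apply: eq_big => [[a b]|ab _]; rewrite ?inE // exprD.
  by move=> a _; rewrite mulr_sumr.
apply: (@congrXn_trans _ _ _ (\sum_(ab in setX A B) 'X^(tile_sum f ab))%R).
  by apply: congrXn_sum => ab _; apply: congrXn_exp; rewrite modn_mod.
rewrite (sum_tile_mult f (fun x : 'I_M => 'X^x : {poly R})%R).
suff -> : count_poly f = (\sum_(x < M) 'X^x *+ tile_mult f x)%R by apply: congrXn_refl.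
by apply: eq_bigr => x _; rewrite scaler_nat.
Qed.

Lemma congrXn_SX_mul f : congrXn M (SX * PB f) (SX *+ #|B|).
Proof.
rewrite mulr_sumr -sumr_const; apply: congrXn_sum => b _.
by rewrite mulrC; apply: congrXn_mul_sumX.
Qed.

Lemma congrXn_SX_mulX f j : congrXn M (SX * PB f ^+ j) (SX *+ (#|B| ^ j)).
Proof.
elim: j => [|j IH]; first by rewrite expr0 mulr1 expn0 congrXn_refl.
rewrite exprSr mulrA expnSr mulrnA; apply: congrXn_trans (congrXnMr _ IH) _.
by rewrite mulrnAl mulrnAC; apply/congrXnMn/congrXn_SX_mul.
Qed.

Lemma PB_Frobenius f : (PB f ^+ t = PB (fun b => (t * f b)%N))%R.
Proof.
have tP : t \in [pchar {poly R}]%R by rewrite pchar_poly.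
rewrite -(pFrobenius_autE tP) rmorph_sum; apply: eq_bigr => b _.
by rewrite mulnC exprM; apply: pFrobenius_autE.
Qed.

Lemma tile_mult_dilate f : tiles_by f -> forall x,
  ((tile_mult (fun b => (t * f b)%N) x)%:R = (#|B| ^ t.-1)%:R :> R)%R.
Proof.
move=> U; apply: congrXn_coef.
have t0 : 0 < t := prime_gt0 (pcharf_prime tR).
have countf : count_poly f = SX.
  by apply: eq_bigr => x _; rewrite ((tiles_byP f).1 U x) scale1r.
apply: congrXn_trans (congrXn_sym (congrXn_tile_polys _)) _.
rewrite -PB_Frobenius -(prednK t0) exprS prednK // mulrA.
apply: congrXn_trans (congrXnMr _ (congrXn_tile_polys f)) _; rewrite countf.
apply: congrXn_trans (congrXn_SX_mulX f t.-1) _.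
by rewrite -sumrMnl; under eq_bigr do rewrite -scaler_nat; apply: congrXn_refl.
Qed.

End Characteristic.

Lemma tiles_by_dilate_prime f t : tiles_by f -> prime t -> coprime t M ->
  tiles_by (fun b => t * f b).
Proof.
move=> U pt ctM; have tFt := pchar_Fp pt.
have ntB : ~~ (t %| #|B|).
  by apply: contraL ctM => tB; rewrite prime_coprime // negbK -(tiles_by_card U) dvdn_mull.
have mult_gt0 x : 0 < tile_mult (fun b => t * f b) x.
  rewrite lt0n; apply: contra ntB => /eqP m0.
  have := tile_mult_dilate tFt U x; rewrite m0 mulr0n => /esym/eqP.
  by rewrite -(dvdn_pcharf tFt) Euclid_dvdX // => /andP[].
have sum_eq : \sum_(x : 'I_M) 1 = \sum_x tile_mult (fun b => t * f b) x.
  by rewrite sum_tile_mult_card (tiles_by_card U) sum1_card card_ord.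
apply/tiles_byP => x; apply/esym/eqP.
have := (leqif_sum (P := predT) (fun i _ => leqif_eq (mult_gt0 i))).2.
by rewrite sum_eq eqxx => /esym/forallP/(_ x).
Qed.

Lemma tiles_by_dilate r : tiling A B -> coprime r M -> tiles_by (fun b => r * b).
Proof.
move=> T; elim/ltn_ind: r => r IH cr.
have [r0|r_gt1|->] := ltngtP r 1; last by apply: eq_tiles_by T => b; rewrite mul1n.
  (* [r = 0] is coprime to [M] only when [M = 1], where every [b] is [0]. *)
  have b0 (b : 'I_M) : r * b = b.
    move: cr; rewrite ltnS leqn0 in r0; rewrite (eqP r0) /coprime gcd0n => /eqP M1.
    by apply/esym/eqP; rewrite mul0n -leqn0 -ltnS -M1.
  exact: eq_tiles_by T.
have [pt tr] := (pdiv_prime r_gt1, pdiv_dvd r).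
have r'r : r %/ pdiv r < r by rewrite ltn_Pdiv ?prime_gt1 // ltnW.
have := tiles_by_dilate_prime (IH _ r'r (coprime_dvdl (dvdn_div tr) cr)) pt
  (coprime_dvdl tr cr).
by apply: eq_tiles_by => b; rewrite mulnA [pdiv r * _]mulnC divnK.
Qed.

Lemma dilate_tile_uniq r (a a' b b' : 'I_M) : tiling A B -> coprime r M ->
  a \in A -> a' \in A -> b \in B -> b' \in B ->
  a + r * b = a' + r * b' %[mod M] -> a = a' /\ b = b'.
Proof.
move=> T cr aA a'A bB b'B e.
have [ab [_ u]] := tiles_by_dilate T cr (Ordinal (ltn_pmod (a + r * b) M0)).
have E1 : ab = (a, b) by apply: u; rewrite /= aA bB /=.
have E2 : ab = (a', b') by apply: u; rewrite /= a'A b'B /= -e.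
by move: E2; rewrite E1 => -[-> ->].
Qed.

Lemma Div_disjoint (a a' b b' : 'I_M) : tiling A B ->
  a \in A -> a' \in A -> b \in B -> b' \in B ->
  gcdn (zdiff M a a') M = gcdn (zdiff M b b') M -> a = a'.
Proof.
move=> T aA a'A bB b'B g.
have [r cr e] := gcdn_zdiff_unit M0 (ltnW (ltn_ord a')) (ltnW (ltn_ord b')) g.
by case: (dilate_tile_uniq T cr aA a'A b'B bB e).
Qed.

End DilatedTilings.

Section FiberConditions.
Variables (M p : nat) (A B : {set 'I_M}).
Hypotheses (M0 : 0 < M) (pp : prime p) (pM : p %| M) (T : tiling A B).
Local Notation n := (logn p M).
Local Notation q := (M %/ p).

Let pnM : p ^ n %| M := pfactor_dvdnn p M.

Definition fiber_gcd_condition := forall (a a' b b' : 'I_M) k, k < p ->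
  a \in A -> a' \in A -> b \in B -> b' \in B ->
  gcdn (zdiff M (a + k * q) a') M = gcdn (zdiff M b b') M ->
  p ^ n %| zdiff M (a + k * q) a'.

Lemma fiberP (z w : 'I_M) :
  reflect (exists k : 'I_p, val w = (z + k * q) %% M) (w \in fiber p z).
Proof.
by rewrite inE; apply: (iffP existsP) => -[k /eqP e]; exists k; rewrite ?e.
Qed.

Lemma mem_fiber (z w : 'I_M) k : val w = z + k * q %[mod M] -> w \in fiber p z.
Proof.
move=> e; apply/fiberP; exists (Ordinal (ltn_pmod k (prime_gt0 pp))).
by rewrite -[val w](modn_small (ltn_ord w)) e /= (congr_modDr _ (mul_q_congr pM (modn_mod k p))).
Qed.

Lemma mulsetP (r c : 'I_M) :
  reflect (exists2 b : 'I_M, b \in B & val c = (r * b) %% M) (c \in mulset r B).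
Proof.
rewrite inE; apply: (iffP existsP) => [[b /andP[bB /eqP e]] | [b bB e]].
  by exists b.
by exists b; rewrite bB e eqxx.
Qed.

Lemma SigmaP (X Y Z : {set 'I_M}) (x : 'I_M) :
  reflect (x \in X /\ exists2 y, y \in Y & exists2 w, w \in Z & val w = (x + y) %% M)
    (x \in Sigma X Y Z).
Proof.
rewrite inE; apply: (iffP andP) => [[xX /existsP[y /andP[yY /existsP[w /andP[wZ /eqP e]]]]]|].
  by split=> //; exists y => //; exists w.
case=> xX [y yY [w wZ e]]; split=> //; apply/existsP; exists y.
by rewrite yY; apply/existsP; exists w; rewrite wZ e eqxx.
Qed.

Lemma fiber_gcd_conditionP :
  (forall a b x : 'I_M, a \in A -> b \in B -> x \in fiber p a ->
     Axy A B x b \subset Pi x (p ^ n)) <-> fiber_gcd_condition.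
Proof.
have a'M (a' : 'I_M) : a' <= M := ltnW (ltn_ord a').
split=> [H a a' b b' k kp aA a'A bB b'B g | H a b x aA bB /fiberP[k ex]].
  pose x : 'I_M := Ordinal (ltn_pmod (a + k * q) M0).
  have xF : x \in fiber p a by apply/fiberP; exists (Ordinal kp).
  have := subsetP (H a b x aA bB xF) a'; rewrite !inE /= zdiff_modl //; apply.
  by rewrite a'A; apply/existsP; exists b'; rewrite b'B g eqxx.
apply/subsetP => a'; rewrite !inE ex zdiff_modl //.
case/andP=> a'A /existsP[b' /andP[b'B /eqP g]].
exact: H a a' b b' k (ltn_ord k) aA a'A bB b'B g.
Qed.

Lemma in_Sigma_mulset_fiber (r z c : 'I_M) : c \in Sigma (mulset r B) A (fiber p z) ->
  exists b : 'I_M, exists a : 'I_M, exists k : 'I_p,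
    [/\ b \in B, a \in A, val c = (r * b) %% M & a + r * b = z + k * q %[mod M]].
Proof.
case/SigmaP=> /mulsetP[b bB ec] [a aA [w /fiberP[k ew] ew']].
by exists b, a, k; split=> //; rewrite -modnDmr -ec addnC -ew' ew.
Qed.

Lemma in_Sigma_fiber_mulset (r z a : 'I_M) : a \in Sigma A (mulset r B) (fiber p z) ->
  exists b : 'I_M, exists k : 'I_p,
    [/\ b \in B, a \in A & a + r * b = z + k * q %[mod M]].
Proof.
case/SigmaP=> aA [c /mulsetP[b bB ec] [w /fiberP[k ew] ew']].
by exists b, k; split=> //; rewrite -modnDmr -ec -ew' ew.
Qed.

Lemma Sigma_mulset_fiber (r a b z : 'I_M) k : a \in A -> b \in B ->
  a + r * b = z + k * q %[mod M] ->
  Ordinal (ltn_pmod (r * b) M0) \in Sigma (mulset r B) A (fiber p z).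
Proof.
move=> aA bB e; apply/SigmaP; split; first by apply/mulsetP; exists b.
exists a => //; exists (Ordinal (ltn_pmod ((r * b) %% M + a) M0)) => //.
by apply: (mem_fiber (k := k)); rewrite /= modn_mod modnDml [_ + a]addnC e.
Qed.

Let tilesT : tiles_by A B (@nat_of_ord M) := T.

Definition tile_part (x : 'I_M) : 'I_M * 'I_M :=
  odflt (x, x) [pick ab in [set ab in setX A B | tile_sum M0 (@nat_of_ord M) ab == x]].

Lemma tile_partP x :
  [&& (tile_part x).1 \in A, (tile_part x).2 \in B & ((tile_part x).1 + (tile_part x).2) %% M == x].
Proof.
rewrite /tile_part; case: pickP => [ab | none] /=; first by rewrite tile_multE.
by have [ab [h _]] := T x; move: (none ab); rewrite tile_multE h.
Qed.

Lemma tile_part_sum ab : ab \in setX A B -> tile_part (tile_sum M0 (@nat_of_ord M) ab) = ab.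
Proof.
move=> abAB; have [ab0 [_ u]] := T (tile_sum M0 (@nat_of_ord M) ab).
by rewrite -(u _ (tile_partP _)) (u ab) // -tile_multE inE abAB eqxx.
Qed.

Lemma sum_tile_part : (\sum_(x : 'I_M) 'X^((tile_part x).1) = polyA A *+ #|B| :> {poly int})%R.
Proof.
rewrite -(sum_tiles_by M0 (fun x : 'I_M => 'X^((tile_part x).1) : {poly int})%R tilesT).
rewrite (eq_bigr (fun ab : 'I_M * 'I_M => 'X^(ab.1))%R) => [|ab abAB]; last first.
  by rewrite tile_part_sum.
rewrite /polyA -sumrMnl (eq_bigr (fun a : 'I_M => \sum_(b in B) 'X^a))%R => [|a _]; last first.
  by rewrite sumr_const.
by rewrite pair_big_dep; apply: eq_bigl => -[a b]; rewrite in_setX.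
Qed.

Definition fiber_shift k (x : 'I_M) : 'I_M := Ordinal (ltn_pmod (x + k * q) M0).

Lemma fiber_shift_inj k : injective (fiber_shift k).
Proof.
move=> x y /(congr1 val) /= /eqP; rewrite eqn_modDr !modn_small // => /eqP.
exact: val_inj.
Qed.

Section FiberGcdConsequences.
Hypothesis H : fiber_gcd_condition.

(* With [k = k1 - k2] modulo [p], [x := a' + k q] satisfies [x - a = r (b - b')]
   modulo [M], so the condition at [a'] puts [a] in the [p ^ n]-class of [x]. *)
Lemma fiber_gcd_congr r (a a' b b' : 'I_M) z k1 k2 : coprime r M ->
  a \in A -> a' \in A -> b \in B -> b' \in B ->
  a + r * b = z + k1 * q %[mod M] -> a' + r * b' = z + k2 * q %[mod M] ->
  r * b = r * b' %[mod p ^ n].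
Proof.
move=> cr aA a'A bB b'B e1 e2.
set k := (k1 + (p - 1) * k2) %% p.
have kp : k < p by rewrite ltn_pmod ?prime_gt0.
have ek : k2 + k = k1 %[mod p].
  rewrite modnDmr addnA [k2 + k1]addnC -addnA -{1}[k2]mul1n -mulnDl.
  by rewrite subnKC ?prime_gt0 // mulnC addnC modnMDl.
have c1 : a' + k * q + r * b' = a + r * b %[mod M].
  rewrite addnAC (congr_modDl _ e2) -addnA -mulnDl.
  by rewrite (congr_modDr _ (mul_q_congr pM ek)) e1.
have c2 : zdiff M (a' + k * q) a = r * zdiff M b b' %[mod M].
  apply: zdiff_congr (ltnW (ltn_ord a)) _; apply/eqP; rewrite -(eqn_modDr (r * b')).
  rewrite -addnA [a + _]addnC addnA -mulnDr.
  by rewrite (congr_modDl _ (congr_modMr r (zdiffK b (ltnW (ltn_ord b'))))) c1 addnC.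
have g : gcdn (zdiff M (a' + k * q) a) M = gcdn (zdiff M b b') M.
  by rewrite (gcdn_congr c2) gcdn_unit.
have := H kp a'A aA bB b'B g; rewrite (dvdn_zdiff _ pnM (ltnW (ltn_ord a))) => /eqP xa.
have := congr_mod_dvd pnM c1; rewrite -modnDml xa modnDml => /eqP.
by rewrite eqn_modDl => /eqP.
Qed.

Lemma fiber_gcd_splits_parity (r : 'I_M) : coprime r M ->
  forall z, splits_parity p n (mulset r B) A (fiber p z).
Proof.
move=> cr z; split=> [c c' cS c'S | a a' aS a'S naa].
  rewrite dvdn_zdiff ?(ltnW (ltn_ord c')) //.
  have [b [a [k [bB aA -> e]]]] := in_Sigma_mulset_fiber cS.
  have [b' [a' [k' [b'B a'A -> e']]]] := in_Sigma_mulset_fiber c'S.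
  by rewrite !(modn_dvdm _ pnM) (fiber_gcd_congr cr aA a'A bB b'B e e').
have [b [k1 [bB aA e1]]] := in_Sigma_fiber_mulset aS.
have [b' [k2 [b'B a'A e2]]] := in_Sigma_fiber_mulset a'S.
have EM : a + k2 * q + r * b = a' + k1 * q + r * b' %[mod M].
  by rewrite addnAC (congr_modDl _ e1) [in RHS]addnAC (congr_modDl _ e2) addnAC.
have E : a + k2 * q = a' + k1 * q %[mod p ^ n].
  apply/eqP; rewrite -(eqn_modDr (r * b')); apply/eqP.
  by rewrite -(congr_modDr _ (fiber_gcd_congr cr aA a'A bB b'B e1 e2)) (congr_mod_dvd pnM EM).
have k12 : k1 != k2.
  apply: contra naa => /eqP ek; apply/eqP.
  have e : a + r * b = a' + r * b' %[mod M] by rewrite e1 e2 ek.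
  exact: (dilate_tile_uniq M0 T cr aA a'A bB b'B e).1.
have a'M := ltnW (ltn_ord a').
have sq := pexp_pred_dvd_q M0 pp pM.
have sM : p ^ n.-1 %| M := dvdn_trans (dvdn_exp2l p (leq_pred n)) pnM.
split; rewrite dvdn_zdiff //; last first.
  apply/negP => /eqP ea; move: E; rewrite -modnDml ea modnDml => /eqP.
  by rewrite eqn_modDl; apply/negP; rewrite eq_sym mul_q_neq.
have := congr_mod_dvd (dvdn_exp2l p (leq_pred n)) E.
rewrite -modnDmr (eqP (dvdn_mull k2 sq)) addn0.
by rewrite -[in RHS]modnDmr (eqP (dvdn_mull k1 sq)) addn0 => ->.
Qed.

Lemma fiber_gcd_Div m : p ^ n %| m -> m %| M -> Div A m -> ~ Div B (m %/ p).
Proof.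
move=> pm mM [a [a' [aA a'A ga]]] [b [b' [bB b'B gb]]].
have pu : p ^ n %| zdiff M a a' by apply: dvdn_trans pm _; rewrite -ga dvdn_gcdl.
have ex := zdiffDl a (1 * q) (ltnW (ltn_ord a')).
have kp : 0 < 1 < p by rewrite prime_gt1.
have g : gcdn (zdiff M (a + 1 * q) a') M = gcdn (zdiff M b b') M.
  by rewrite (gcdn_congr ex) (gcdn_shift_pexp M0 pp pM kp pu) ga gb.
have := H (prime_gt1 pp) aA a'A bB b'B g.
by rewrite (dvdn_congr pnM ex) dvdn_addr // mul1n (negbTE (pexp_ndvd_q M0 pp pM)).
Qed.

Lemma tile_part_shift k x :
  (tile_part (fiber_shift k x)).1 = (tile_part x).1 + k * q %[mod p ^ n].
Proof.
move: (tile_partP x) (tile_partP (fiber_shift k x)).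
set ab := tile_part x; set ab' := tile_part _.
case/and3P=> aA bB /eqP e1; case/and3P=> a'A b'B /eqP e2.
have E1 : ab.1 + 1 * ab.2 = x + 0 * q %[mod M].
  by rewrite mul1n mul0n addn0 e1 modn_small.
have E2 : ab'.1 + 1 * ab'.2 = x + k * q %[mod M] by rewrite mul1n e2.
have bb := fiber_gcd_congr (coprime1n M) aA a'A bB b'B E1 E2.
rewrite !mul1n in bb E1 E2; apply/eqP; rewrite -(eqn_modDr ab.2); apply/eqP.
rewrite (congr_modDr _ bb) (congr_mod_dvd pnM E2) addnAC.
by rewrite (congr_modDl _ (congr_mod_dvd pnM E1)) mul0n addn0.
Qed.

Lemma fiber_gcd_Phi : ('Phi_(p ^ n) %| polyA A)%R.
Proof.
have [k ek] := exists_mul_q_pexp_pred M0 pp pM.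
have n0 := logn_gt0_dvd M0 pp pM.
set Y := (polyA A *+ #|B| : {poly int})%R.
have shiftY : congrXn (p ^ n) Y ('X^(p ^ n.-1) * Y)%R.
  rewrite /Y -sum_tile_part {1}(reindex_inj (@fiber_shift_inj k)) mulr_sumr.
  apply: congrXn_sum => x _; rewrite -exprD; apply: congrXn_exp.
  by rewrite (tile_part_shift k x) (congr_modDr _ ek) addnC.
have PhiY : ('Phi_(p ^ n) %| Y)%R.
  have : ('X^(p ^ n) - 1 %| Y * ('X^(p ^ n.-1) - 1))%R.
    by rewrite mulrBr mulr1 mulrC -[X in (_ %| X)%R]opprB dvdpNr.
  rewrite -{1}(prednK n0) Xpexp_sub1_Cyclotomic // prednK // dvdp_mul2r //.
  by rewrite -size_poly_eq0 size_XnsubC // expn_gt0 prime_gt0.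
have B0 : (#|B|%:R : int) != 0.
  rewrite Num.Theory.pnatr_eq0 -lt0n.
  have : 0 < #|A| * #|B| by rewrite (tiles_by_card M0 tilesT).
  by rewrite muln_gt0 => /andP[].
by move: PhiY; rewrite /Y -scaler_nat dvdpZr.
Qed.

End FiberGcdConsequences.

Lemma Div_fiber_gcd :
  (forall m, p ^ n %| m -> m %| M -> Div A m -> ~ Div B (m %/ p)) -> fiber_gcd_condition.
Proof.
move=> HD a a' b b' k kp aA a'A bB b'B.
set u := zdiff M a a'; have ex := zdiffDl a (k * q) (ltnW (ltn_ord a')).
rewrite (dvdn_congr pnM ex) (gcdn_congr ex) => g.
have [k0|k0] := posnP k.
  move: g; rewrite k0 mul0n !addn0 => g.
  by rewrite /u (Div_disjoint M0 T aA a'A bB b'B g) zdiffnn dvdn0.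
have kp' : 0 < k < p by rewrite k0 kp.
apply/negPn/negP => nd; have [pu|npu] := boolP (p ^ n %| u).
  apply: (HD (gcdn u M)); first by rewrite dvdn_gcd pu pnM.
  - exact: dvdn_gcdr.
  - by exists a, a'.
  - by exists b, b'; split=> //; rewrite -g (gcdn_shift_pexp M0 pp pM kp' pu).
move: g; rewrite (gcdn_shift pp pM kp' npu nd) => g.
by move: npu; rewrite /u (Div_disjoint M0 T aA a'A bB b'B g) zdiffnn dvdn0.
Qed.

Lemma splits_fiber_gcd :
  (forall r : 'I_M, coprime r M ->
     forall z, splits_parity p n (mulset r B) A (fiber p z)) -> fiber_gcd_condition.
Proof.
move=> HS a a' b b' k kp aA a'A bB b'B g.
have a'M := ltnW (ltn_ord a').
have [r cr e] := gcdn_zdiff_unit M0 a'M (ltnW (ltn_ord b')) g.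
pose z : 'I_M := Ordinal (ltn_pmod (a' + r * b) M0).
have zE : a' + r * b = z + 0 * q %[mod M] by rewrite mul0n addn0 modn_mod.
have zE' : a + r * b' = z + (p - k) * q %[mod M].
  apply/eqP; rewrite -(eqn_modDr (k * q)) -[X in _ == X %% _]addnA -mulnDl subnK ?(ltnW kp) //.
  by rewrite [p * _]mulnC divnK // modnDr addnAC e zE mul0n addn0.
have := (HS r cr z).1 _ _ (Sigma_mulset_fiber aA b'B zE') (Sigma_mulset_fiber a'A bB zE).
rewrite dvdn_zdiff ?(ltnW (ltn_pmod _ M0)) //= !(modn_dvdm _ pnM) => /eqP rr.
rewrite dvdn_zdiff //; apply/eqP.
have := congr_mod_dvd pnM e; rewrite -(congr_modDr _ rr) => /eqP.
by rewrite eqn_modDr => /eqP.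
Qed.

End FiberConditions.

Theorem lemma5p4 (M p : nat) (A B : {set 'I_M}) :
  0 < M -> prime p -> p %| M -> tiling A B ->
  let n := logn p M in
  let condI :=
    (('Phi_(p ^ n) %| polyA A)%R /\
     forall m : nat, p ^ n %| m -> m %| M -> Div A m -> ~ Div B (m %/ p)) in
  let condII :=
    (forall r : 'I_M, coprime r M ->
       forall z : 'I_M, splits_parity p n (mulset r B) A (fiber p z)) in
  let condIII :=
    (forall a b x : 'I_M, a \in A -> b \in B -> x \in fiber p a ->
       Axy A B x b \subset Pi x (p ^ n)) in
  (condI <-> condII) /\ (condII <-> condIII).
Proof.
move=> M0 pp pM T n condI condII condIII.
have I_iff : condI <-> fiber_gcd_condition p A B.
  split=> [[_ HD] | H]; first exact: Div_fiber_gcd.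
  by split; [apply: fiber_gcd_Phi | apply: fiber_gcd_Div].
have II_iff : condII <-> fiber_gcd_condition p A B.
  by split=> [|H]; [apply: splits_fiber_gcd | apply: fiber_gcd_splits_parity].
have III_iff : condIII <-> fiber_gcd_condition p A B by apply: fiber_gcd_conditionP.
split; [exact: iff_trans I_iff (iff_sym II_iff) | exact: iff_trans II_iff (iff_sym III_iff)].
Qed.
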